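(* Fix $\alpha\in(0,1)$. Let $X_i$ take values $-1,0,1$ with probabilities $\frac{1-\alpha}{2-\alpha},\ \frac{\alpha}{2-\alpha},\ \frac{1-\alpha}{2-\alpha}$ respectively, and $Y_i=X_i+\epsilon_i$ with $\epsilon_i\mid X_i\sim\mathrm{Uniform}([-2|X_i|,2|X_i|])$ (so $\epsilon_i=0$ when $X_i=0$), with $(X_i,Y_i)$, $i=1,\ldots,n+1$, i.i.d. Let $V(x,y)=|y-x|$, take the localizer $H_{i,j}=\mathbb 1\{|X_j-X_i|\le 1.5\}$, and use $\tilde\alpha=\alpha$ without tuning. Then, as $n\to\infty$, $\mathbb P\{V_{n+1}\le Q(\alpha;\hat{\mathcal F})\}\to\frac{\alpha}{2-\alpha}=1-\frac{2(1-\alpha)}{2-\alpha}$, i.e. the coverage falls short of $\alpha$ asymptotically by $\frac{\alpha(1-\alpha)}{2-\alpha}$.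
   Context: $p^H_{i,j}=H_{i,j}/\sum_{k=1}^{n+1}H_{i,k}$; $V_i=V(X_i,Y_i)$; $\hat{\mathcal F}=\sum_{j=1}^{n}p^H_{n+1,j}\delta_{V_j}+p^H_{n+1,n+1}\delta_{\infty}$, where $\delta_v$ is the point mass at $v$. For a probability distribution $\mathcal F$ on $\mathbb R\cup\{\infty\}$ and $a\in[0,1]$, $Q(a;\mathcal F)=\inf\{t:\mathbb P_{T\sim\mathcal F}(T\le t)\ge a\}$. *)

From HB Require Import structures.
From mathcomp Require Import all_boot all_order all_algebra.
From mathcomp Require Import all_classical all_reals all_analysis.
Set Implicit Arguments. Unset Strict Implicit. Unset Printing Implicit Defensive.
Import Order.TTheory GRing.Theory Num.Theory.
Import numFieldNormedType.Exports.
Local Open Scope classical_set_scope.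
Local Open Scope ring_scope.

Section Conformal.
Variable R : realType.

Definition Vscore (x y : R) : R := `|y - x|.

Definition Hloc (xi xj : R) : R := if `|xj - xi| <= 3 / 2 then 1 else 0.

(* Indices are 0-based: data points 0..n, test point is index n
   (paper: 1..n+1, test point n+1). *)

Definition pH (X : nat -> R) (n j : nat) : R :=
  Hloc (X n) (X j) / \sum_(k < n.+1) Hloc (X n) (X k).

(* CDF of \hat F = sum_{j<n} p^H_{n+1,j} delta_{V_j} + p^H_{n+1,n+1} delta_oo,
   evaluated at t in R \cup {-oo, +oo}: P_{T ~ \hat F}(T <= t). *)
Definition Fhat_cdf (X V : nat -> R) (n : nat) (t : \bar R) : R :=
  match t with
  | -oo%E => 0
  | +oo%E => 1
  | (r%:E)%E => \sum_(j < n) pH X n j * (if V j <= r then 1 else 0)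
  end.

Definition Qhat (a : R) (X V : nat -> R) (n : nat) : \bar R :=
  ereal_inf [set t : \bar R | a <= Fhat_cdf X V n t].

Definition pairs_indep (d : measure_display) (T : measurableType d)
  (P : probability T R) (X Y : nat -> T -> R) : Prop :=
  forall (J : seq nat) (B : nat -> set (R * R)),
    uniq J -> (forall j, j \in J -> measurable (B j)) ->
    P (\big[setI/setT]_(j <- J) [set w | B j (X j w, Y j w)]) =
    (\prod_(j <- J) P [set w | B j (X j w, Y j w)])%E.

End Conformal.

(* A test point with X = 0 has score 0, which lies below every point where the
   localized CDF \hat F reaches alpha, so it is covered: this gives the lower bound
   alpha/(2-alpha).  Conversely, if X_{n+1} = c in {-1, 1} and V_{n+1} > del, then
   coverage forces \hat F(del) < alpha, i.e.
     sum_{j <= n} H(c, X_j) (1{V_j <= del} - alpha) < alpha.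
   The summands are i.i.d., bounded by 1, and have mean (1-alpha) del / (2 (2-alpha)) > 0,
   because the mass alpha/(2-alpha) of X_j = 0 exactly compensates the -alpha on the
   window {0, c}.  By Chebyshev this event has probability O(1/n), so the coverage is
   at most alpha/(2-alpha) + (1-alpha) del/(2-alpha) + O(1/n) for every del > 0.
   Each summand only depends on a three-valued "localization type" of (X_j, Y_j), and
   independence makes the law of the type profile a finite product measure, on which
   Chebyshev's inequality is proved by direct computation. *)

From HB Require Import structures.
From mathcomp Require Import all_boot all_order all_algebra.
From mathcomp Require Import all_classical all_reals all_analysis.
From mathcomp Require Import measurable_realfun lra ring.
Import Order.TTheory GRing.Theory Num.Theory.
Import numFieldNormedType.Exports.
Local Open Scope classical_set_scope.
Local Open Scope ring_scope.
Set Implicit Arguments. Unset Strict Implicit. Unset Printing Implicit Defensive.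

Section real_probability.
Context d (T : measurableType d) (R : realType) (P : probability T R).

Definition Pr (A : set T) : R := fine (P A).

Lemma PrE A : measurable A -> P A = (Pr A)%:E.
Proof. by move=> mA; rewrite /Pr fineK // fin_num_measure. Qed.

Lemma Pr_ge0 A : 0 <= Pr A.
Proof. exact: fine_ge0 (measure_ge0 P A). Qed.

Lemma Pr_setT : Pr setT = 1.
Proof. by rewrite /Pr probability_setT. Qed.

Lemma le_Pr A B : measurable A -> measurable B -> A `<=` B -> Pr A <= Pr B.
Proof.
move=> mA mB AB; rewrite -lee_fin -!PrE //.
by apply: le_measure => //; rewrite inE.
Qed.

Lemma Pr_setC A : measurable A -> Pr (~` A) = 1 - Pr A.
Proof.
move=> mA; apply: EFin_inj; rewrite -PrE; last exact: measurableC.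
by rewrite probability_setC // PrE.
Qed.

Lemma Pr_setU_le A B : measurable A -> measurable B ->
  Pr (A `|` B) <= Pr A + Pr B.
Proof.
move=> mA mB; rewrite -lee_fin EFinD -!PrE //; last exact: measurableU.
exact: measureU2.
Qed.

Lemma Pr_setU A B : measurable A -> measurable B -> A `&` B = set0 ->
  Pr (A `|` B) = Pr A + Pr B.
Proof.
move=> mA mB AB0; apply: EFin_inj; rewrite EFinD -!PrE //; last exact: measurableU.
exact: measureU.
Qed.

Lemma Pr_bigsetU_le (I : Type) (r : seq I) (Q : pred I) (F : I -> set T) :
  (forall i, Q i -> measurable (F i)) ->
  Pr (\big[setU/set0]_(i <- r | Q i) F i) <= \sum_(i <- r | Q i) Pr (F i).
Proof.
move=> mF; elim: r => [|i r IH]; first by rewrite !big_nil /Pr measure0.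
rewrite !big_cons; case: ifP => // Qi.
apply: le_trans (Pr_setU_le (mF i Qi) _) _; first exact: bigsetU_measurable.
by rewrite lerD2l.
Qed.

Lemma sum_Pr_fibers (J : finType) (f : T -> J) :
  (forall t, measurable (f @^-1` [set t])) ->
  \sum_t Pr (f @^-1` [set t]) = 1.
Proof.
move=> mf.
have Pr_fibers_seq (s : seq J) : uniq s ->
    Pr (\big[setU/set0]_(t <- s) f @^-1` [set t]) =
    \sum_(t <- s) Pr (f @^-1` [set t]).
  elim: s => [|t s IH] /=; first by rewrite !big_nil /Pr measure0.
  case/andP => ts us; rewrite !big_cons Pr_setU ?IH //.
    by apply: bigsetU_measurable => u _; exact: mf.
  rewrite -bigcup_seq; apply/seteqP; split => // w [/= ft] [u /= su fu].
  by move: ts; rewrite -ft fu su.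
rewrite -Pr_fibers_seq ?index_enum_uniq // -Pr_setT; congr Pr.
apply/seteqP; split => // w _; rewrite -bigcup_seq.
by exists (f w) => //=; exact: mem_index_enum.
Qed.

End real_probability.

Section localized_quantile.
Context (R : realType).
Implicit Types (x v : nat -> R) (n : nat) (a r : R).

Definition loc_mass x n : R := \sum_(k < n.+1) Hloc (x n) (x k).

Definition loc_count x v n r : R :=
  \sum_(j < n) Hloc (x n) (x j) * (if v j <= r then 1 else 0).

Lemma Hloc_ge0 (a b : R) : 0 <= Hloc a b.
Proof. by rewrite /Hloc; case: ifP. Qed.

Lemma Hloc_id (a : R) : Hloc a a = 1.
Proof. by rewrite /Hloc subrr normr0 ifT // divr_ge0. Qed.

Lemma loc_massE x n : loc_mass x n = 1 + \sum_(j < n) Hloc (x n) (x j).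
Proof. by rewrite /loc_mass big_ord_recr /= Hloc_id addrC. Qed.

Lemma loc_mass_gt0 x n : 0 < loc_mass x n.
Proof.
rewrite loc_massE (lt_le_trans ltr01) // lerDl.
by apply: sumr_ge0 => j _; exact: Hloc_ge0.
Qed.

Lemma Fhat_cdfE x v n r :
  Fhat_cdf x v n r%:E = loc_count x v n r / loc_mass x n.
Proof.
rewrite /= /loc_count mulr_suml; apply: eq_bigr => j _.
by rewrite /pH mulrAC.
Qed.

Lemma Fhat_cdf_ltE x v n r a :
  (Fhat_cdf x v n r%:E < a) = (loc_count x v n r < a * loc_mass x n).
Proof. by rewrite Fhat_cdfE ltr_pdivrMr // loc_mass_gt0. Qed.

Lemma le_QhatP a x v n : 0 < a ->
  ((v n)%:E <= Qhat a x v n)%E <->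
  (forall r, a <= Fhat_cdf x v n r%:E -> v n <= r).
Proof.
move=> a0; split.
  move=> vQ r ar; rewrite -lee_fin; apply: le_trans vQ _.
  exact: ereal_inf_lbound.
move=> h; apply: le_ereal_inf_tmp => -[r| |] //=.
- by move=> /h; rewrite lee_fin.
- by move=> _; rewrite leey.
- by rewrite leNgt a0.
Qed.

(* [Fhat_cdf] is a step function jumping only at the [v j], so only those
   points need to be tested. *)
Lemma le_Qhat_finP a x v n : 0 < a ->
  ((v n)%:E <= Qhat a x v n)%E <->
  (forall j : 'I_n, v j < v n -> loc_count x v n (v j) < a * loc_mass x n).
Proof.
move=> a0; rewrite le_QhatP //; split.
  move=> h j vj; rewrite -Fhat_cdf_ltE ltNge; apply/negP => /h.
  by rewrite leNgt vj.
move=> h r ar; rewrite leNgt; apply/negP => rv.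
have [j0 vj0] : exists j0 : 'I_n, v j0 <= r.
  apply/not_existsP => hne; move: ar.
  rewrite Fhat_cdfE /loc_count big1 ?mul0r ?leNgt ?a0 // => j _.
  by rewrite ifF ?mulr0 //; apply/negP => vj; exact: (hne j).
case: (@arg_maxP _ R _ j0 (fun j : 'I_n => v j <= r) v vj0) => jm vjm jm_max.
have count_eq : loc_count x v n r = loc_count x v n (v jm).
  apply: eq_bigr => k _; suff -> : (v k <= r) = (v k <= v jm) by [].
  apply/idP/idP.
    exact: jm_max.
  by move=> vk; exact: le_trans vk vjm.
move: (h jm (le_lt_trans vjm rv)).
by rewrite -count_eq -Fhat_cdf_ltE ltNge ar.
Qed.

End localized_quantile.

Section measurability.
Context d (T : measurableType d) (R : realType).
Implicit Types f g : T -> R.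

Lemma measurable_ler f g : measurable_fun setT f -> measurable_fun setT g ->
  measurable [set w | f w <= g w].
Proof.
move=> mf mg; rewrite -[X in measurable X]setTI.
exact: (measurable_fun_ler mf mg measurableT (_ : measurable [set true])).
Qed.

Lemma measurable_ltr f g : measurable_fun setT f -> measurable_fun setT g ->
  measurable [set w | f w < g w].
Proof.
move=> mf mg; rewrite -[X in measurable X]setTI.
exact: (measurable_fun_ltr mf mg measurableT (_ : measurable [set true])).
Qed.

Lemma measurable_fun_Hloc f g : measurable_fun setT f -> measurable_fun setT g ->
  measurable_fun setT (fun w => Hloc (f w) (g w)).
Proof.
move=> mf mg; apply: measurable_fun_ifT => //.
apply: measurable_fun_ler => //.
by apply: measurableT_comp => //; exact: measurable_funB.
Qed.

Lemma measurable_fun_Vscore f g : measurable_fun setT f -> measurable_fun setT g ->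
  measurable_fun setT (fun w => Vscore (f w) (g w)).
Proof. by move=> mf mg; apply: measurableT_comp => //; exact: measurable_funB. Qed.

End measurability.

Section chebyshev_finite_product.
Context (R : realType) (n : nat) (J : finType) (q : 'I_n -> J -> R) (g : J -> R).
Hypothesis q_ge0 : forall i t, 0 <= q i t.
Hypothesis q_sum1 : forall i, \sum_t q i t = 1.
Hypothesis g_le1 : forall t, `|g t| <= 1.

Let mean i := \sum_t q i t * g t.
Let centered i t := g t - mean i.
Let weight (s : {ffun 'I_n -> J}) := \prod_i q i (s i).

Let weight_ge0 s : 0 <= weight s.
Proof. by apply: prodr_ge0 => i _. Qed.

Let mean_le1 i : `|mean i| <= 1.
Proof.
rewrite (le_trans (ler_norm_sum _ _ _)) // -(q_sum1 i) ler_sum // => t _.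
by rewrite normrM ger0_norm // ler_piMr.
Qed.

Let centered_sqr_le4 i t : centered i t ^+ 2 <= 4.
Proof.
have c_le2 : `|centered i t| <= 2.
  rewrite (le_trans (ler_normB _ _)) // (_ : 2 = 1 + 1) //.
  exact: lerD (g_le1 t) (mean_le1 i).
rewrite -real_normK ?num_real // (_ : 4 = 2 ^+ 2); last by rewrite expr2; lra.
by rewrite lerXn2r // ?nnegrE.
Qed.

Let centered_mean0 i : \sum_t q i t * centered i t = 0.
Proof.
under eq_bigr do rewrite mulrBr.
by rewrite sumrB -mulr_suml q_sum1 mul1r subrr.
Qed.

Let cross_moment i k :
  \sum_s weight s * (centered i (s i) * centered k (s k)) =
  \prod_j \sum_t (q j t * ((if j == i then centered i t else 1) *
                          (if j == k then centered k t else 1))).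
Proof.
rewrite bigA_distr_bigA /=; apply: eq_bigr => s _.
rewrite big_split /= big_split /=; congr (_ * (_ * _)).
  by rewrite [RHS](bigD1 i) //= eqxx big1 ?mulr1 // => j /negbTE ->.
by rewrite [RHS](bigD1 k) //= eqxx big1 ?mulr1 // => j /negbTE ->.
Qed.

Let cross_moment_le i k :
  \sum_s weight s * (centered i (s i) * centered k (s k)) <=
  if i == k then 4 else 0.
Proof.
rewrite cross_moment (bigD1 i) //= eqxx.
have [<-|ik] := eqVneq i k; last first.
  by under eq_bigr do rewrite mulr1; rewrite centered_mean0 mul0r.
rewrite [X in _ * X]big1 ?mulr1; last first.
  by move=> j /negbTE ->; under eq_bigr do rewrite !mulr1; exact: q_sum1.
apply: le_trans (_ : \sum_t q i t * 4 <= _); last by rewrite -mulr_suml q_sum1 mul1r.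
apply: ler_sum => t _; rewrite -expr2.
by apply: ler_wpM2l; [exact: q_ge0|exact: centered_sqr_le4].
Qed.

Let second_moment_le :
  \sum_s weight s * (\sum_i centered i (s i)) ^+ 2 <= 4 * n%:R.
Proof.
under eq_bigr do rewrite expr2 mulr_suml mulr_sumr.
rewrite exchange_big /=.
apply: le_trans (_ : \sum_(i < n) 4 <= _); last first.
  by rewrite sumr_const card_ord mulr_natr.
apply: ler_sum => i _; under eq_bigr do rewrite !mulr_sumr.
rewrite exchange_big /=.
apply: le_trans (_ : \sum_(k < n) (if i == k then 4 else 0) <= _).
  by apply: ler_sum => k _; exact: cross_moment_le.
by rewrite (bigD1 i) //= eqxx big1 ?addr0 // => k /negbTE; rewrite eq_sym => ->.
Qed.

Lemma chebyshev_finite_product (c a : R) :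
  (forall i, c <= \sum_t q i t * g t) -> a < n%:R * c ->
  \sum_(s : {ffun 'I_n -> J} | \sum_i g (s i) < a) \prod_i q i (s i)
    <= 4 * n%:R / (n%:R * c - a) ^+ 2.
Proof.
move=> c_le_mean a_lt; set D := n%:R * c - a.
have D_gt0 : 0 < D by rewrite subr_gt0.
have nc_le : n%:R * c <= \sum_i mean i.
  have -> : n%:R * c = \sum_(i < n) c by rewrite sumr_const card_ord mulr_natl.
  by apply: ler_sum => i _; exact: c_le_mean.
apply: le_trans
  (_ : \sum_s weight s * ((\sum_i centered i (s i)) ^+ 2 / D ^+ 2) <= _).
  rewrite big_mkcond /=; apply: ler_sum => s _; case: ifP => sum_lt; last first.
    by rewrite mulr_ge0 // divr_ge0 // sqr_ge0.
  rewrite ler_peMr //; first exact: weight_ge0.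
  rewrite ler_pdivlMr ?exprn_gt0 // mul1r.
  have -> : \sum_i centered i (s i) = - (\sum_i mean i - \sum_i g (s i)).
    by rewrite opprB sumrB.
  have D_le : D <= \sum_i mean i - \sum_i g (s i) by rewrite /D; lra.
  by rewrite sqrrN !expr2; apply: ler_pM => //; exact: ltW.
under eq_bigr do rewrite mulrA.
rewrite -mulr_suml; apply: ler_wpM2r; last exact: second_moment_le.
by rewrite invr_ge0 sqr_ge0.
Qed.

End chebyshev_finite_product.

Lemma chebyshev_bound_near (R : realType) (c a e : R) :
  0 < c -> 0 <= a -> 0 < e ->
  \forall n \near \oo, a < n%:R * c /\ 4 * n%:R / (n%:R * c - a) ^+ 2 <= e.
Proof.
move=> c0 a0 e0; set K := 2 * a / c + 16 / (c ^+ 2 * e).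
have ce0 : 0 < c ^+ 2 * e by rewrite mulr_gt0 // exprn_gt0.
have K1 : 0 <= 2 * a / c by rewrite divr_ge0 // ?mulr_ge0 // ltW.
have K2 : 0 < 16 / (c ^+ 2 * e) by rewrite divr_gt0.
apply: filterS (nbhs_infty_ger K) => n /=; set x := n%:R; rewrite /K => Kx.
have x_a : 2 * a < x * c by rewrite -ltr_pdivrMr //; lra.
have x_e : 16 <= x * (c ^+ 2 * e) by rewrite -ler_pdivrMr //; lra.
split; first lra.
have half_le : x * c / 2 <= x * c - a by lra.
rewrite ler_pdivrMr; last by apply: exprn_gt0; lra.
have sqr_le : (x * c / 2) ^+ 2 <= (x * c - a) ^+ 2.
  by rewrite lerXn2r // nnegrE; lra.
apply: le_trans (_ : e * (x * c / 2) ^+ 2 <= _); last first.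
  by apply: ler_wpM2l => //; exact: ltW.
have -> : e * (x * c / 2) ^+ 2 = x * (x * (c ^+ 2 * e)) / 4.
  by rewrite !expr2; field.
have x_ge0 : 0 <= x by [].
nra.
Qed.

Lemma cvg_lb_eventually_le (R : realType) (u : nat -> R) (l : R) :
  (forall n, l <= u n) ->
  (forall e, 0 < e -> \forall n \near \oo, u n <= l + e) ->
  u @ \oo --> l.
Proof.
move=> lb ub; apply/cvgrPdist_le => e e0.
apply: filterS (ub e e0) => n un_le.
by rewrite distrC ger0_norm ?subr_ge0 //; lra.
Qed.

Lemma sum_option_bool (V : nmodType) (F : option bool -> V) :
  \sum_t F t = F None + F (Some true) + F (Some false).
Proof.
rewrite (bigD1 None) // (bigD1 (Some true)) // (bigD1 (Some false)) //=.
by rewrite big1 ?addr0 ?addrA // => -[[]|].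
Qed.

Lemma lebesgue_measure_itv_sym (R : realType) (a : R) : 0 <= a <= 2 ->
  lebesgue_measure (`[- a, a] `&` `[(-2)%R, 2%R]) = (2 * a)%:E.
Proof.
case/andP => a0 a2; rewrite setIidl; last first.
  by move=> z /=; rewrite !in_itv /= => /andP[za az]; apply/andP; split; lra.
rewrite lebesgue_measure_itv /= lte_fin.
case: ifP => [_|/negbT]; first by rewrite -EFinB; congr (_%:E); lra.
rewrite -leNgt => a_le0; have -> : a = 0 by lra.
by rewrite mulr0.
Qed.

Section localized_coverage.
Context (R : realType) (alpha : R) d (T : measurableType d) (P : probability T R)
  (X Y : nat -> {RV P >-> R}).
Hypothesis alpha01 : 0 < alpha < 1.

Local Notation xs w := (fun i => X i w).
Local Notation V i w := (Vscore (X i w) (Y i w)).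
Local Notation vs w := (fun i => V i w).

Let mX i : measurable_fun setT (X i) := measurable_funPT (X i).
Let mY i : measurable_fun setT (Y i) := measurable_funPT (Y i).

Definition covered n := [set w | ((V n w)%:E <= Qhat alpha (xs w) (vs w) n)%E].

Lemma measurable_covered n : measurable (covered n).
Proof.
have a0 : 0 < alpha by case/andP: alpha01.
have -> : covered n = \big[setI/setT]_(j < n)
    ([set w | V n w <= V j w] `|`
     [set w | loc_count (xs w) (vs w) n (V j w) < alpha * loc_mass (xs w) n]).
  rewrite -bigcap_seq; apply/seteqP; split => w; rewrite /covered /= le_Qhat_finP //.
    move=> cov j _; have [//|Vjn] := leP (V n w) (V j w); first by left.
    by right; exact: cov.
  move=> cov j Vjn; have [|//] := cov j (mem_index_enum _).
  by rewrite /= leNgt Vjn.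
have mV i : measurable_fun setT (fun w => V i w).
  exact: measurable_fun_Vscore.
have mH i : measurable_fun setT (fun w => Hloc (X n w) (X i w)).
  exact: measurable_fun_Hloc.
apply: bigsetI_measurable => j _; apply: measurableU; first exact: measurable_ler.
apply: measurable_ltr.
  apply: measurable_sum => k; apply: measurable_funM => //.
  by apply: measurable_fun_ifT => //; exact: measurable_fun_ler.
by apply: measurable_funM => //; apply: measurable_sum => k.
Qed.

Hypothesis law0 : forall i (A : set R), measurable A ->
  P [set w | X i w = 0 /\ A (Y i w - X i w)] =
  ((alpha / (2 - alpha))%:E * \d_(0%R : R) A)%E.
Hypothesis law1 : forall i (c : R) (A : set R), (c = -1 \/ c = 1) -> measurable A ->
  P [set w | X i w = c /\ A (Y i w - X i w)] =
  (((1 - alpha) / (2 - alpha))%:E *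
     (lebesgue_measure (A `&` `[(-2)%R, 2%R]) * (4^-1)%:E))%E.

Let p0 := alpha / (2 - alpha).
Let p1 := (1 - alpha) / (2 - alpha).

Let two_sub_alpha_neq0 : 2 - alpha != 0.
Proof. by case/andP: alpha01 => _ a1; rewrite lt0r_neq0 //; lra. Qed.

Let p0_p1 : p0 = alpha * (1 - p1).
Proof. by rewrite /p0 /p1; field; exact: two_sub_alpha_neq0. Qed.

Definition cell i (x : R) (A : set R) := [set w | X i w = x /\ A (Y i w - X i w)].

Lemma measurable_cell i x A : measurable A -> measurable (cell i x A).
Proof.
move=> mA; apply: measurableI; first exact: measurable_funPTI (measurable_set1 x).
by have := measurable_funB (mY i) (mX i) measurableT mA; rewrite setTI.
Qed.

Lemma Pr_cell0 i : Pr P (cell i 0 [set 0]) = p0.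
Proof.
apply: EFin_inj; rewrite -PrE; last by apply: measurable_cell; exact: measurable_set1.
by rewrite law0 ?diracE ?in_set1 ?eqxx ?mule1 //; exact: measurable_set1.
Qed.

Lemma Pr_cell_itv i c (del : R) : (c = -1 \/ c = 1) -> 0 <= del <= 2 ->
  Pr P (cell i c `[- del, del]) = p1 * del / 2.
Proof.
move=> c1 del2; apply: EFin_inj; rewrite -PrE; last exact: measurable_cell.
rewrite law1 // lebesgue_measure_itv_sym // -!EFinM; congr (_%:E).
by rewrite /p1; field; exact: two_sub_alpha_neq0.
Qed.

Lemma Pr_X_eq i c : (c = -1 \/ c = 1) -> Pr P [set w | X i w = c] = p1.
Proof.
move=> c1; have -> : [set w | X i w = c] = cell i c setT.
  by apply/seteqP; split => w //= [].
apply: EFin_inj; rewrite -PrE; last exact: measurable_cell.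
rewrite law1 // setTI -[X in lebesgue_measure X]setIid.
rewrite lebesgue_measure_itv_sym; last by apply/andP; split; lra.
rewrite -!EFinM; congr (_%:E).
by rewrite /p1; field; exact: two_sub_alpha_neq0.
Qed.

Definition loc_type (c del x y : R) : option bool :=
  if `|x - c| <= 3 / 2 then Some (`|y - x| <= del) else None.

Definition loc_gain (t : option bool) : R :=
  if t is Some b then b%:R - alpha else 0.

Lemma loc_gain_le1 t : `|loc_gain t| <= 1.
Proof.
case/andP: alpha01 => a0 a1.
case: t => [[]|] /=; rewrite ?normr0 // ?sub0r ?normrN ger0_norm; lra.
Qed.

Lemma sum_loc_gain (x y : nat -> R) del n :
  \sum_(i < n) loc_gain (loc_type (x n) del (x i) (y i)) =
  loc_count x (fun i => Vscore (x i) (y i)) n del - alpha * (loc_mass x n - 1).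
Proof.
rewrite loc_massE [1 + _]addrC addrK /loc_count mulr_sumr -sumrB.
apply: eq_bigr => i _; rewrite /loc_type /Hloc /Vscore distrC.
by case: ifP => _; case: ifP => _ /=; rewrite ?mul1r ?mul0r ?mulr1 ?mulr0 ?subr0.
Qed.

Definition type_set c del t : set (R * R) := [set p | loc_type c del p.1 p.2 = t].

Lemma measurable_type_set c del t : measurable (type_set c del t).
Proof.
have mloc : measurable [set p : R * R | `|p.1 - c| <= 3 / 2].
  apply: measurable_ler => //; apply: measurableT_comp => //.
  exact: measurable_funB.
have mclose : measurable [set p : R * R | `|p.2 - p.1| <= del].
  apply: measurable_ler => //; apply: measurableT_comp => //.
  exact: measurable_funB.
rewrite /type_set /loc_type; case: t => [b|].
  have -> : [set p : R * R | (if `|p.1 - c| <= 3 / 2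
                                then Some (`|p.2 - p.1| <= del) else None) = Some b] =
      [set p | `|p.1 - c| <= 3 / 2] `&` [set p | (`|p.2 - p.1| <= del) = b].
    apply/seteqP; split => p /=; last by case=> -> <-.
    by case: ifP => // loc [<-].
  apply: measurableI => //; case: b => //.
  have -> : [set p : R * R | (`|p.2 - p.1| <= del) = false] =
      ~` [set p | `|p.2 - p.1| <= del].
    by apply/seteqP; split => p /=; [move=> ->|move/negP/negbTE].
  exact: measurableC.
have -> : [set p : R * R | (if `|p.1 - c| <= 3 / 2
                            then Some (`|p.2 - p.1| <= del) else None) = None] =
    ~` [set p | `|p.1 - c| <= 3 / 2].
  by apply/seteqP; split => p /=; case: ifP.
exact: measurableC.
Qed.

Definition type_event c del i t : set T :=
  [set w | type_set c del t (X i w, Y i w)].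

Lemma measurable_type_event c del i t : measurable (type_event c del i t).
Proof.
have := measurable_fun_pair (mX i) (mY i) measurableT (measurable_type_set c del t).
by rewrite setTI.
Qed.

Lemma sum_Pr_type_event c del i : \sum_t Pr P (type_event c del i t) = 1.
Proof. exact: sum_Pr_fibers (measurable_type_event c del i). Qed.

Hypothesis indep : pairs_indep P (fun i => X i : T -> R) (fun i => Y i : T -> R).

Definition profile_event c del n (s : {ffun 'I_n -> option bool}) : set T :=
  \big[setI/setT]_(i < n) type_event c del i (s i).

Lemma measurable_profile_event c del n s :
  measurable (@profile_event c del n s).
Proof. by apply: bigsetI_measurable => i _; exact: measurable_type_event. Qed.

Lemma Pr_profile_event c del n s :
  Pr P (@profile_event c del n s) = \prod_(i < n) Pr P (type_event c del i (s i)).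
Proof.
pose B j := if (insub j : option 'I_n) is Some i then type_set c del (s i) else setT.
have mB j : measurable (B j).
  by rewrite /B; case: insub => // i; exact: measurable_type_set.
have -> : profile_event c del s =
    \big[setI/setT]_(0 <= j < n) [set w | B j (X j w, Y j w)].
  by rewrite big_mkord; apply: eq_bigr => i _; rewrite /B valK.
have mBXY j : measurable [set w | B j (X j w, Y j w)].
  by have := measurable_fun_pair (mX j) (mY j) measurableT (mB j); rewrite setTI.
apply: EFin_inj; rewrite -PrE; last by apply: bigsetI_measurable => j _.
rewrite indep ?iota_uniq // big_mkord -prodEFin; apply: eq_bigr => i _.
by rewrite /B valK -PrE //; exact: measurable_type_event.
Qed.

Lemma profile_event_loc_type c del n w :
  @profile_event c del n [ffun i : 'I_n => loc_type c del (X i w) (Y i w)] w.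
Proof.
apply: (big_ind (fun A : set T => A w)) => // i _.
by rewrite /type_event /type_set /= ffunE.
Qed.

Definition low_cdf_event c del n : set T :=
  \big[setU/set0]_(s : {ffun 'I_n -> option bool} | \sum_i loc_gain (s i) < alpha)
    profile_event c del s.

Lemma measurable_low_cdf_event c del n : measurable (low_cdf_event c del n).
Proof. by apply: bigsetU_measurable => s _; exact: measurable_profile_event. Qed.

Lemma type_gain_mean_ge c del i : (c = -1 \/ c = 1) -> 0 < del <= 2 ->
  p1 * del / 2 <= \sum_t Pr P (type_event c del i t) * loc_gain t.
Proof.
move=> c1 /andP[del0 del2]; case/andP: alpha01 => a0 a1.
have c_neq0 : c != 0 by case: c1 => ->; rewrite ?oppr_eq0 oner_eq0.
have loc_near : Pr P (cell i 0 [set 0] `|` cell i c `[- del, del])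
    <= Pr P (type_event c del i (Some true)).
  apply: le_Pr; [|exact: measurable_type_event|].
    by apply: measurableU; apply: measurable_cell => //; exact: measurable_set1.
  move=> w; rewrite /type_event /type_set /loc_type /=.
  have c_loc : `|c| <= 3 / 2 by case: c1 => ->; rewrite ?normrN normr1; lra.
  case=> -[-> eps].
    by rewrite sub0r normrN c_loc eps normr0 ltW.
  move: eps; rewrite /= in_itv /= -ler_norml => eps.
  by rewrite subrr normr0 ifT ?eps //; lra.
have far : Pr P [set w | X i w = - c] <= Pr P (type_event c del i None).
  apply: le_Pr; [exact: measurable_funPTI (measurable_set1 _)|
                 exact: measurable_type_event|].
  move=> w; rewrite /type_event /type_set /loc_type /= => ->; rewrite ifF //.
  apply/negbTE; rewrite -ltNge ltr_normr.
  by case: c1 => ->; apply/orP; [left|right]; lra.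
rewrite Pr_setU in loc_near; last first.
- apply/seteqP; split => // w /= [[X0 _] [Xc _]].
  by move: c_neq0; rewrite -Xc X0 eqxx.
- exact: measurable_cell.
- by apply: measurable_cell; exact: measurable_set1.
rewrite Pr_cell0 Pr_cell_itv // in loc_near; last by apply/andP; split; lra.
rewrite Pr_X_eq in far; last by case: c1 => ->; rewrite ?opprK; [right|left].
have := sum_Pr_type_event c del i; rewrite !sum_option_bool /= mulr0 add0r => sum1.
move: loc_near far sum1 p0_p1; nra.
Qed.

Lemma Pr_low_cdf_event_le c del n : (c = -1 \/ c = 1) -> 0 < del <= 2 ->
  alpha < n%:R * (p1 * del / 2) ->
  Pr P (low_cdf_event c del n) <= 4 * n%:R / (n%:R * (p1 * del / 2) - alpha) ^+ 2.
Proof.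
move=> c1 del2 n_large.
apply: le_trans (Pr_bigsetU_le P _ (fun s _ => measurable_profile_event c del s)) _.
under eq_bigr do rewrite Pr_profile_event.
apply: (chebyshev_finite_product (q := fun i t => Pr P (type_event c del i t))) => //.
- by move=> i t; exact: Pr_ge0.
- exact: sum_Pr_type_event.
- exact: loc_gain_le1.
- by move=> i; exact: type_gain_mean_ge.
Qed.

Lemma cell0_sub_covered n : cell n 0 [set 0] `<=` covered n.
Proof.
case/andP: alpha01 => a0 _ w [X0 eps0].
apply/(le_QhatP _ _ _ a0) => r; rewrite /Vscore eps0 normr0; apply: contraTT.
rewrite -!ltNge => r_lt0; rewrite Fhat_cdfE /loc_count big1 ?mul0r // => j _.
by rewrite ifF ?mulr0 //; apply/negbTE; rewrite -ltNge (lt_le_trans r_lt0).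
Qed.

(* Coverage with [V n > del] forces [Fhat_cdf] at [del] below [alpha]. *)
Lemma covered_sub c del n :
  covered n `&` [set w | X n w = c] `<=` cell n c `[- del, del] `|` low_cdf_event c del n.
Proof.
case/andP: alpha01 => a0 _ w [cov Xc].
have [V_le|V_gt] := leP (V n w) del.
  by left; split => //=; rewrite in_itv /= -ler_norml.
right; rewrite /low_cdf_event -bigcup_seq_cond.
exists [ffun i : 'I_n => loc_type c del (X i w) (Y i w)]; last first.
  exact: profile_event_loc_type.
rewrite /= mem_index_enum /=.
under eq_bigr do rewrite ffunE; rewrite -Xc (sum_loc_gain (xs w) (fun i => Y i w)).
have : Fhat_cdf (xs w) (vs w) n del%:E < alpha.
  by rewrite ltNge; apply/negP => /(proj1 (le_QhatP _ _ _ a0) cov); rewrite leNgt V_gt.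
rewrite Fhat_cdf_ltE; lra.
Qed.

Lemma Pr_covered_ge n : p0 <= Pr P (covered n).
Proof.
have mcell0 : measurable (cell n 0 [set 0]).
  by apply: measurable_cell; exact: measurable_set1.
have := le_Pr P mcell0 (measurable_covered n) (@cell0_sub_covered n).
by rewrite Pr_cell0.
Qed.

Let bad_bound del n := 4 * n%:R / (n%:R * (p1 * del / 2) - alpha) ^+ 2.

Lemma Pr_covered_X_eq_le c del n : (c = -1 \/ c = 1) -> 0 < del <= 2 ->
  alpha < n%:R * (p1 * del / 2) ->
  Pr P (covered n `&` [set w | X n w = c]) <= p1 * del / 2 + bad_bound del n.
Proof.
move=> c1 del2 n_large.
have del2' : 0 <= del <= 2 by case/andP: del2 => d0 ->; rewrite ltW.
rewrite -(Pr_cell_itv n c1 del2').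
apply: le_trans (le_Pr P _ _ (@covered_sub c del n)) _.
- apply: measurableI; first exact: measurable_covered.
  exact: measurable_funPTI (measurable_set1 _).
- apply: measurableU; first exact: measurable_cell.
  exact: measurable_low_cdf_event.
apply: le_trans (Pr_setU_le P _ (measurable_low_cdf_event c del n)) _.
  exact: measurable_cell.
by rewrite lerD2l; exact: Pr_low_cdf_event_le.
Qed.

Lemma Pr_covered_le n del : 0 < del <= 2 -> alpha < n%:R * (p1 * del / 2) ->
  Pr P (covered n) <= p0 + p1 * del + 2 * bad_bound del n.
Proof.
move=> del2 n_large; pose Xeq c := [set w | X n w = c].
have mXeq c : measurable (Xeq c) := measurable_funPTI (X n) (measurable_set1 c).
have mcovX c : measurable (covered n `&` Xeq c).
  exact: measurableI (measurable_covered n) (mXeq c).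
have Pr_neither : Pr P (~` (Xeq 1 `|` Xeq (-1))) = p0.
  rewrite Pr_setC ?Pr_setU //; last exact: measurableU.
    rewrite (Pr_X_eq n (or_intror erefl)) (Pr_X_eq n (or_introl erefl)).
    by rewrite /p0 /p1; field; exact: two_sub_alpha_neq0.
  apply/seteqP; split => // w []; rewrite /Xeq /= => ->; lra.
have cover : covered n `<=`
    ~` (Xeq 1 `|` Xeq (-1)) `|` (covered n `&` Xeq 1 `|` covered n `&` Xeq (-1)).
  move=> w cov; have [X1|X1] := eqVneq (X n w) 1; first by right; left.
  have [X2|X2] := eqVneq (X n w) (-1); first by right; right.
  by left => -[] /eqP; [rewrite (negbTE X1)|rewrite (negbTE X2)].
have mneither : measurable (~` (Xeq 1 `|` Xeq (-1))).
  by apply: measurableC; exact: measurableU.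
have mboth : measurable (covered n `&` Xeq 1 `|` covered n `&` Xeq (-1)).
  exact: measurableU.
have := le_Pr P (measurable_covered n) (measurableU _ _ mneither mboth) cover.
have := Pr_setU_le P mneither mboth; rewrite Pr_neither.
have := Pr_setU_le P (mcovX 1) (mcovX (-1)).
have := Pr_covered_X_eq_le (or_intror erefl) del2 n_large.
have := Pr_covered_X_eq_le (or_introl erefl) del2 n_large.
lra.
Qed.

Lemma Pr_covered_cvg : (fun n => P (covered n)) @ \oo --> p0%:E.
Proof.
case/andP: alpha01 => a0 a1.
have p0_gt0 : 0 < p0 by rewrite divr_gt0 //; lra.
have p1_gt0 : 0 < p1 by rewrite divr_gt0 //; lra.
have p1_le1 : p1 <= 1 by rewrite ler_pdivrMr; lra.
apply/(neq0_fine_cvgP _ (lt0r_neq0 p0_gt0)).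
apply: cvg_lb_eventually_le => [|e e0]; first exact: Pr_covered_ge.
pose del := Num.min 1 (e / 2).
have del_le1 : del <= 1 by rewrite ge_min lexx.
have del_le : del <= e / 2 by rewrite ge_min lexx orbT.
have del_gt0 : 0 < del by rewrite lt_min ltr01 /=; lra.
have p1_del : p1 * del <= e / 2 by nra.
have c0 : 0 < p1 * del / 2 by rewrite divr_gt0 // mulr_gt0.
have e4 : 0 < e / 4 by rewrite divr_gt0.
apply: filterS (chebyshev_bound_near c0 (ltW a0) e4) => n [n_large bad_le].
have del2 : 0 < del <= 2 by apply/andP; split; lra.
have := Pr_covered_le del2 n_large.
rewrite /bad_bound /=; rewrite -/(Pr P _); lra.
Qed.

End localized_coverage.

Unset Implicit Arguments.

Theorem mainTheorem6 (R : realType) (alpha : R)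
  (d : measure_display) (T : measurableType d) (P : probability T R)
  (X Y : nat -> {RV P >-> R}) :
  0 < alpha < 1 ->
  (* (X_i, Y_i) are mutually independent *)
  pairs_indep P (fun i => X i : T -> R) (fun i => Y i : T -> R) ->
  (* law of each pair: X_i = 0 w.p. alpha/(2-alpha), and then eps_i = Y_i - X_i = 0 *)
  (forall i (A : set R), measurable A ->
     P [set w | X i w = 0 /\ A (Y i w - X i w)] =
     ((alpha / (2 - alpha))%:E * \d_(0%R : R) A)%E) ->
  (* X_i = x in {-1, 1} w.p. (1-alpha)/(2-alpha) each, and then
     eps_i = Y_i - X_i ~ Uniform[-2,2] *)
  (forall i (x : R) (A : set R), (x = -1 \/ x = 1) -> measurable A ->
     P [set w | X i w = x /\ A (Y i w - X i w)] =
     (((1 - alpha) / (2 - alpha))%:E *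
        (lebesgue_measure (A `&` `[(-2)%R, 2%R]) * (4^-1)%:E))%E) ->
  (fun n : nat =>
     P [set w | ((Vscore (X n w) (Y n w))%:E <=
                 Qhat alpha (fun i => X i w) (fun i => Vscore (X i w) (Y i w)) n)%E])
    @ \oo --> (alpha / (2 - alpha))%:E.
Proof. by move=> alpha01 indep law0 law1; exact: Pr_covered_cvg. Qed.
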